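(* Let $P$ be a convex polygon, let $\mathcal{R}$ be the smallest axis-parallel rectangle containing $P$, with side lengths $L\ge W>0$, and let $r=\frac14\sqrt{L^2+4W^2}$. Suppose that $P$ has four distinct vertices lying respectively on the four different sides of $\mathcal{R}$ and forming a (nondegenerate) quadrilateral. Then $r\le 2\,r_{opt}(P)$.
   Context: For a compact set $X\subset\mathbb{R}^2$, $r_{opt}(X)$ denotes the minimum $r$ such that two closed disks of radius $r$ have union containing $X$. The number $r$ is the radius of the two congruent disks circumscribing the two halves $\frac L2\times W$ of $\mathcal{R}$ obtained by splitting it through its longer sides' midpoints. *)

From HB Require Import structures.
From mathcomp Require Import all_boot all_order all_algebra.
From mathcomp Require Import boolp classical_sets reals.
Set Implicit Arguments. Unset Strict Implicit. Unset Printing Implicit Defensive.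
Import Order.TTheory GRing.Theory Num.Theory.
Local Open Scope ring_scope.
Local Open Scope classical_set_scope.

Section Defs.
Variable R : realType.

Definition pt := (R * R)%type.

Definition conv_hull (s : seq pt) : set pt :=
  [set p | exists w : 'I_(size s) -> R,
      (forall i, 0 <= w i) /\ \sum_(i < size s) w i = 1 /\
      p.1 = \sum_(i < size s) w i * (nth (0,0) s i).1 /\
      p.2 = \sum_(i < size s) w i * (nth (0,0) s i).2].

Definition convex_polygon (P : set pt) : Prop :=
  exists s : seq pt, (0 < size s)%N /\ P = conv_hull s.

Definition is_vertex (X : set pt) (v : pt) : Prop :=
  X v /\ forall a b : pt, X a -> X b -> forall t : R, 0 < t < 1 ->
    v = ((1 - t) * a.1 + t * b.1, (1 - t) * a.2 + t * b.2) -> a = b.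

Definition rect (x0 x1 y0 y1 : R) : set pt :=
  [set p | x0 <= p.1 <= x1 /\ y0 <= p.2 <= y1].

Definition is_bounding_box (X : set pt) (x0 x1 y0 y1 : R) : Prop :=
  x0 <= x1 /\ y0 <= y1 /\ X `<=` rect x0 x1 y0 y1 /\
  forall a0 a1 b0 b1 : R, a0 <= a1 -> b0 <= b1 ->
    X `<=` rect a0 a1 b0 b1 -> rect x0 x1 y0 y1 `<=` rect a0 a1 b0 b1.

Definition left_side (x0 x1 y0 y1 : R) : set pt := [set p | p.1 = x0 /\ y0 <= p.2 <= y1].
Definition right_side (x0 x1 y0 y1 : R) : set pt := [set p | p.1 = x1 /\ y0 <= p.2 <= y1].
Definition bottom_side (x0 x1 y0 y1 : R) : set pt := [set p | p.2 = y0 /\ x0 <= p.1 <= x1].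
Definition top_side (x0 x1 y0 y1 : R) : set pt := [set p | p.2 = y1 /\ x0 <= p.1 <= x1].

Definition collinear (a b c : pt) : Prop :=
  (b.1 - a.1) * (c.2 - a.2) - (b.2 - a.2) * (c.1 - a.1) = 0.

Definition disk (c : pt) (r : R) : set pt :=
  [set p | (p.1 - c.1) ^+ 2 + (p.2 - c.2) ^+ 2 <= r ^+ 2].

Definition r_opt (X : set pt) : R :=
  inf [set r : R | 0 <= r /\ exists c1 c2 : pt, X `<=` disk c1 r `|` disk c2 r].

End Defs.

From HB Require Import structures.
From mathcomp Require Import all_boot all_order all_algebra.
From mathcomp Require Import boolp classical_sets reals.
From mathcomp Require Import ring lra.
Import Order.TTheory GRing.Theory Num.Theory.
Local Open Scope ring_scope.
Local Open Scope classical_set_scope.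
Set Implicit Arguments. Unset Strict Implicit. Unset Printing Implicit Defensive.

(* Two disks of radius rho covering P are separated by the perpendicular bisector of
   their centres, i.e. by the sign of dist2 z c1 - dist2 z c2, which is affine in z.
   Two points of P on the same side lie in a common disk, hence at distance at most
   2 rho; a point of P on the bisector lies in both disks, hence within 2 rho of every
   point of P, and by convexity such a point exists on every segment of P joining the
   two sides.  If the vertices on two opposite sides of the bounding box are on the
   same side, one extent of the box is at most 2 rho and the other at most 4 rho.
   Otherwise the bisector separates the four vertices into two pairs of adjacent ones,
   the two segments joining the pairs cross it at points e and g, and each vertex is
   within 2 rho of e or of g; a sum-of-squares estimate of these four distances gives
   L^2 + 4 W^2 <= 64 rho^2, that is r <= 2 rho. *)

Lemma ternary_form_ge0 (R : realFieldType) (a11 a12 a13 a22 a23 a33 x y z : R) :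
  0 < a11 -> 0 < a11 * a22 - a12 ^+ 2 ->
  0 <= a11 * a22 * a33 + 2 * a12 * a23 * a13
       - a11 * a23 ^+ 2 - a22 * a13 ^+ 2 - a33 * a12 ^+ 2 ->
  0 <= a11 * x ^+ 2 + a22 * y ^+ 2 + a33 * z ^+ 2
       + 2 * (a12 * x * y + a13 * x * z + a23 * y * z).
Proof.
set m := a11 * a22 - a12 ^+ 2; set det := (X in 0 <= X -> _) => a11_gt0 m_gt0 det_ge0.
set Q := (X in 0 <= X).
have LDL : a11 * m * Q = m * (a11 * x + a12 * y + a13 * z) ^+ 2
    + (m * y + (a11 * a23 - a12 * a13) * z) ^+ 2 + a11 * det * z ^+ 2.
  by rewrite /Q /m /det; ring.
have : 0 <= a11 * m * Q.
  rewrite LDL !addr_ge0 ?sqr_ge0 // mulr_ge0 ?sqr_ge0 //.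
  - exact: ltW.
  - by rewrite mulr_ge0 // ltW.
by rewrite pmulr_rge0 // mulr_gt0.
Qed.

Lemma crossing_poly_ge0 (R : realFieldType) (t s : R) :
  0 <= t <= 1 -> 0 <= s <= 1 ->
  0 <= 6 - 15 * s ^+ 2 + 15 * s ^+ 3 - t * (12 + 10 * s - 31 * s ^+ 2 + 24 * s ^+ 3)
       + t ^+ 2 * (17 - 3 * s + 4 * s ^+ 2 + 12 * s ^+ 3) - t ^+ 3 * (3 + 12 * s ^+ 2).
Proof.
move=> /andP[t0 t1] /andP[s0 s1].
(* Bernstein expansion of bidegree (4, 5), binomials absorbed: all coefficients are naturals. *)
pose c := [:: [:: 6; 30; 45; 30; 15; 6]; [:: 12; 50; 51; 9; 5; 9];
  [:: 17; 52; 45; 23; 34; 21]; [:: 19; 59; 75; 73; 62; 24]; [:: 8; 27; 36; 29; 18; 6]]%N.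
have -> : 6 - 15 * s ^+ 2 + 15 * s ^+ 3 - t * (12 + 10 * s - 31 * s ^+ 2 + 24 * s ^+ 3)
       + t ^+ 2 * (17 - 3 * s + 4 * s ^+ 2 + 12 * s ^+ 3) - t ^+ 3 * (3 + 12 * s ^+ 2)
  = \sum_(k < 5) \sum_(l < 6) (nth 0 (nth [::] c k) l)%:R
      * (t ^+ k * (1 - t) ^+ (4 - k) * (s ^+ l * (1 - s) ^+ (5 - l))).
  by rewrite !big_ord_recr !big_ord0 /=; ring.
apply: sumr_ge0 => k _; apply: sumr_ge0 => l _.
by rewrite !mulr_ge0 ?exprn_ge0 ?subr_ge0.
Qed.

(* Applied to both coordinates, with the roles of the two crossing segments exchanged,
   the weights 5 + 3 (t - s) and 5 + 3 (s - t) add up to 10 and lie in [2, 8]. *)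
Lemma cross_sq_sum_ge (R : realFieldType) (l b r u t s : R) :
  0 <= t <= 1 -> 0 <= s <= 1 ->
  (5 + 3 * (t - s)) * (r - l) ^+ 2 <= 8 * ((l - ((1 - t) * b + t * r)) ^+ 2
    + (u - ((1 - t) * b + t * r)) ^+ 2 + (r - ((1 - s) * l + s * u)) ^+ 2
    + (b - ((1 - s) * l + s * u)) ^+ 2).
Proof.
move=> t01 s01.
have := crossing_poly_ge0 t01 s01; set F := (X in 0 <= X) => F_ge0.
pose a11 := 8 * (2 * (1 - t) ^+ 2 + 1); pose a12 := - 8 * (1 - t + s).
pose a13 := 16 * (1 - t) * t; pose a22 := 8 * (1 + 2 * s ^+ 2); pose a23 := - 8 * (t + s).
pose a33 := 8 * (2 * t ^+ 2 + 1) - (5 + 3 * (t - s)).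
have det : a11 * a22 * a33 + 2 * a12 * a23 * a13
    - a11 * a23 ^+ 2 - a22 * a13 ^+ 2 - a33 * a12 ^+ 2 = 64 * F.
  by rewrite /a11 /a12 /a13 /a22 /a23 /a33 /F; ring.
rewrite -subr_ge0.
have -> : 8 * ((l - ((1 - t) * b + t * r)) ^+ 2 + (u - ((1 - t) * b + t * r)) ^+ 2
    + (r - ((1 - s) * l + s * u)) ^+ 2 + (b - ((1 - s) * l + s * u)) ^+ 2)
    - (5 + 3 * (t - s)) * (r - l) ^+ 2
  = a11 * (b - l) ^+ 2 + a22 * (u - l) ^+ 2 + a33 * (r - l) ^+ 2
    + 2 * (a12 * (b - l) * (u - l) + a13 * (b - l) * (r - l) + a23 * (u - l) * (r - l)).
  by rewrite /a11 /a12 /a13 /a22 /a23 /a33; ring.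
apply: ternary_form_ge0; last by rewrite det mulr_ge0.
- by rewrite /a11; have := sqr_ge0 (1 - t); lra.
- have -> : a11 * a22 - a12 ^+ 2 = 64 * ((1 - t - s) ^+ 2 + 1 + 4 * ((1 - t) * s) ^+ 2).
    by rewrite /a11 /a12 /a22; ring.
  by have := sqr_ge0 (1 - t - s); have := sqr_ge0 ((1 - t) * s); lra.
Qed.

Lemma max_min_sq_le (R : realDomainType) (X Y a : R) :
  0 <= X -> 0 <= Y -> 1 <= a <= 4 ->
  Num.max X Y ^+ 2 + 4 * Num.min X Y ^+ 2 <= a * X ^+ 2 + (5 - a) * Y ^+ 2.
Proof.
move=> X0 Y0 /andP[a1 a4]; rewrite maxEle minEle.
have [XY | /ltW YX] := leP X Y.
- have := ler_pM X0 X0 XY XY; rewrite -!expr2; nra.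
- have := ler_pM Y0 Y0 YX YX; rewrite -!expr2; nra.
Qed.

Lemma affine_root (R : realFieldType) (a b : R) : (a <= 0) != (b <= 0) ->
  exists2 t, 0 <= t <= 1 & (1 - t) * a + t * b = 0.
Proof.
wlog [a0 b0] : a b / a <= 0 /\ 0 < b => [base|_].
  case: (lerP a 0) => a0; case: (lerP b 0) => b0 //= _.
    by apply: base (conj a0 b0) _; rewrite a0 leNgt b0.
  have [|t t01 root] := base b a (conj b0 a0); first by rewrite b0 leNgt a0.
  by exists (1 - t); [lra | rewrite -root; ring].
have ba : 0 < b - a by lra.
exists (- a / (b - a)); last by field; rewrite lt0r_neq0.
by rewrite divr_ge0 ?oppr_ge0 ?(ltW ba) //= ler_pdivrMr //; lra.
Qed.

Section Plane.
Variable R : realType.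
Implicit Types (p q z w c : pt R) (t r : R).

Definition dist2 p q : R := (p.1 - q.1) ^+ 2 + (p.2 - q.2) ^+ 2.

Definition segpt p q t : pt R := ((1 - t) * p.1 + t * q.1, (1 - t) * p.2 + t * q.2).

Lemma dist2C p q : dist2 p q = dist2 q p.
Proof. by rewrite /dist2; ring. Qed.

Lemma sqr_dx_le_dist2 p q : (q.1 - p.1) ^+ 2 <= dist2 p q.
Proof. by rewrite dist2C lerDl sqr_ge0. Qed.

Lemma sqr_dy_le_dist2 p q : (q.2 - p.2) ^+ 2 <= dist2 p q.
Proof. by rewrite dist2C lerDr sqr_ge0. Qed.

Lemma dist2_le_via p m q : dist2 p q <= 2 * dist2 p m + 2 * dist2 m q.
Proof.
rewrite /dist2 -subr_ge0.
have -> : 2 * ((p.1 - m.1) ^+ 2 + (p.2 - m.2) ^+ 2) + 2 * ((m.1 - q.1) ^+ 2 + (m.2 - q.2) ^+ 2)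
    - ((p.1 - q.1) ^+ 2 + (p.2 - q.2) ^+ 2)
  = (p.1 - 2 * m.1 + q.1) ^+ 2 + (p.2 - 2 * m.2 + q.2) ^+ 2 by ring.
by rewrite addr_ge0 ?sqr_ge0.
Qed.

Lemma diskE c r p : disk c r p = (dist2 p c <= r ^+ 2).
Proof. by []. Qed.

Lemma dist2_disk c r p q : disk c r p -> disk c r q -> dist2 p q <= 4 * r ^+ 2.
Proof.
rewrite !diskE => pc qc; have := dist2_le_via p c q; rewrite (dist2C c q); lra.
Qed.

Lemma conv_hull_segpt (s : seq (pt R)) p q t :
  conv_hull s p -> conv_hull s q -> 0 <= t <= 1 -> conv_hull s (segpt p q t).
Proof.
move=> [wp [wp0 [wp1 [wpx wpy]]]] [wq [wq0 [wq1 [wqx wqy]]]] /andP[t0 t1].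
exists (fun i => (1 - t) * wp i + t * wq i); split; [|split; [|split]].
- by move=> i; rewrite addr_ge0 // mulr_ge0 // subr_ge0.
- by rewrite big_split /= -!mulr_sumr wp1 wq1 !mulr1 subrK.
- by rewrite /segpt /= wpx wqx !mulr_sumr -big_split /=; apply: eq_bigr => i _; ring.
- by rewrite /segpt /= wpy wqy !mulr_sumr -big_split /=; apply: eq_bigr => i _; ring.
Qed.

Definition nearer c1 c2 z : bool := dist2 z c1 <= dist2 z c2.

Lemma dist2_diff_segpt c1 c2 p q t :
  dist2 (segpt p q t) c1 - dist2 (segpt p q t) c2
  = (1 - t) * (dist2 p c1 - dist2 p c2) + t * (dist2 q c1 - dist2 q c2).
Proof. by rewrite /dist2 /segpt /=; ring. Qed.

Lemma segpt_equidistant c1 c2 p q : nearer c1 c2 p != nearer c1 c2 q ->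
  exists2 t, 0 <= t <= 1 & dist2 (segpt p q t) c1 = dist2 (segpt p q t) c2.
Proof.
rewrite /nearer -(subr_le0 (dist2 p c2)) -(subr_le0 (dist2 q c2)).
move=> /affine_root[t t01 root].
by exists t => //; apply/eqP; rewrite -subr_eq0 dist2_diff_segpt root.
Qed.

Lemma two_crossings_bound vl vb vr vt t s D : 0 <= t <= 1 -> 0 <= s <= 1 ->
  dist2 vl (segpt vb vr t) <= D -> dist2 vt (segpt vb vr t) <= D ->
  dist2 vr (segpt vl vt s) <= D -> dist2 vb (segpt vl vt s) <= D ->
  exists2 a : R, 1 <= a <= 4 &
    a * (vr.1 - vl.1) ^+ 2 + (5 - a) * (vt.2 - vb.2) ^+ 2 <= 16 * D.
Proof.
move=> t01 s01; rewrite /dist2 /segpt /= => le1 le2 le3 le4.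
have := cross_sq_sum_ge vl.1 vb.1 vr.1 vt.1 t01 s01.
have := cross_sq_sum_ge vb.2 vl.2 vt.2 vr.2 s01 t01.
move: t01 s01 => /andP[t0 t1] /andP[s0 s1] Sy Sx.
exists ((5 + 3 * (t - s)) / 2); first by apply/andP; split; lra.
nra.
Qed.

Section TwoDiskCover.
Variables (P : set (pt R)) (c1 c2 : pt R) (rho : R).
Hypothesis convexP : forall p q t, P p -> P q -> 0 <= t <= 1 -> P (segpt p q t).
Hypothesis cover : P `<=` disk c1 rho `|` disk c2 rho.

Lemma cover_nearer z : P z -> disk (if nearer c1 c2 z then c1 else c2) rho z.
Proof.
by move=> /cover Dz; rewrite /nearer; case: leP => ?; case: Dz; rewrite !diskE //; lra.
Qed.

Lemma cover_same_side z w : P z -> P w -> nearer c1 c2 z = nearer c1 c2 w ->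
  dist2 z w <= 4 * rho ^+ 2.
Proof.
move=> /cover_nearer Dz /cover_nearer + zw; rewrite -zw; exact: dist2_disk.
Qed.

Lemma cover_equidistant z w : P z -> P w -> dist2 w c1 = dist2 w c2 ->
  dist2 z w <= 4 * rho ^+ 2.
Proof.
move=> Pz Pw wc.
have [Dw1 Dw2] : disk c1 rho w /\ disk c2 rho w.
  by case: (cover Pw); rewrite !diskE -wc.
by case: (cover Pz) => Dz; [exact: dist2_disk Dz Dw1 | exact: dist2_disk Dz Dw2].
Qed.

Lemma cover_crossing p q : P p -> P q -> nearer c1 c2 p != nearer c1 c2 q ->
  exists2 t, 0 <= t <= 1 & forall z, P z -> dist2 z (segpt p q t) <= 4 * rho ^+ 2.
Proof.
move=> Pp Pq /segpt_equidistant[t t01 equi]; exists t => // z Pz.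
exact: cover_equidistant Pz (convexP Pp Pq t01) equi.
Qed.

Lemma cover_dist2_le z w : P z -> P w -> dist2 z w <= 16 * rho ^+ 2.
Proof.
move=> Pz Pw; have := sqr_ge0 rho.
have [zw | zw] := eqVneq (nearer c1 c2 z) (nearer c1 c2 w).
  by have := cover_same_side Pz Pw zw; lra.
have [t _ near] := cover_crossing Pz Pw zw.
have := near z Pz; have := near w Pw.
by have := dist2_le_via z (segpt z w t) w; rewrite (dist2C (segpt z w t)); lra.
Qed.

Lemma cover_width_height vl vb vr vt : P vl -> P vb -> P vr -> P vt ->
  exists2 a : R, 1 <= a <= 4 &
    a * (vr.1 - vl.1) ^+ 2 + (5 - a) * (vt.2 - vb.2) ^+ 2 <= 64 * rho ^+ 2.
Proof.
move=> Pvl Pvb Pvr Pvt; have := sqr_ge0 rho.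
have := sqr_dx_le_dist2 vl vr; have := sqr_dy_le_dist2 vb vt.
have [lr | lr] := eqVneq (nearer c1 c2 vl) (nearer c1 c2 vr).
  exists 4; first by apply/andP; split; lra.
  by have := cover_same_side Pvl Pvr lr; have := cover_dist2_le Pvb Pvt; lra.
have [bt | bt] := eqVneq (nearer c1 c2 vb) (nearer c1 c2 vt).
  exists 1; first by apply/andP; split; lra.
  by have := cover_same_side Pvb Pvt bt; have := cover_dist2_le Pvl Pvr; lra.
move=> _ _ _.
have [lb | lb] := eqVneq (nearer c1 c2 vl) (nearer c1 c2 vb).
  have br : nearer c1 c2 vb != nearer c1 c2 vr by rewrite -lb.
  have lt : nearer c1 c2 vl != nearer c1 c2 vt by rewrite lb.
  have [t t01 Ne] := cover_crossing Pvb Pvr br.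
  have [s s01 Ng] := cover_crossing Pvl Pvt lt.
  have [a a14 bound] := two_crossings_bound t01 s01 (Ne _ Pvl) (Ne _ Pvt) (Ng _ Pvr) (Ng _ Pvb).
  by exists a => //; lra.
have tr : nearer c1 c2 vt != nearer c1 c2 vr.
  by move: lr bt lb; case: (nearer c1 c2 vl); case: (nearer c1 c2 vb);
    case: (nearer c1 c2 vr); case: (nearer c1 c2 vt).
have [t t01 Ne] := cover_crossing Pvt Pvr tr.
have [s s01 Ng] := cover_crossing Pvl Pvb lb.
have [a a14 bound] := two_crossings_bound t01 s01 (Ne _ Pvl) (Ne _ Pvb) (Ng _ Pvr) (Ng _ Pvt).
by exists a => //; rewrite -sqrrN opprB; lra.
Qed.

End TwoDiskCover.

Lemma rect_sub_disk x0 x1 y0 y1 : x0 <= x1 -> y0 <= y1 ->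
  rect x0 x1 y0 y1 `<=` disk ((x0, y0) : pt R) (x1 - x0 + (y1 - y0)).
Proof.
move=> lex ley z [/andP[zx0 zx1] /andP[zy0 zy1]]; rewrite /disk /=.
have : 0 <= z.1 - x0 by lra. have : 0 <= z.2 - y0 by lra.
nra.
Qed.

Lemma r_opt_ge (X : set (pt R)) m :
  (exists r c1 c2, 0 <= r /\ X `<=` disk c1 r `|` disk c2 r) ->
  (forall r c1 c2, 0 <= r -> X `<=` disk c1 r `|` disk c2 r -> m <= r) ->
  m <= r_opt X.
Proof.
move=> [r [c1 [c2 [r0 cov]]]] lb; apply: lb_le_inf.
  by exists r; split => //; exists c1, c2.
by move=> r' [r'0 [c1' [c2' cov']]]; exact: lb cov'.
Qed.

End Plane.

Lemma sqrtr_le (R : rcfType) (x y : R) : 0 <= y -> x <= y ^+ 2 -> Num.sqrt x <= y.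
Proof. by move=> y0 xy; rewrite -(ger0_norm y0) -sqrtr_sqr ler_wsqrtr. Qed.

Unset Implicit Arguments.

Theorem lemma1 (R : realType) (P : set (pt R)) (x0 x1 y0 y1 : R)
    (vl vr vb vt : pt R) :
  convex_polygon P ->
  is_bounding_box P x0 x1 y0 y1 ->
  let L := Num.max (x1 - x0) (y1 - y0) in
  let W := Num.min (x1 - x0) (y1 - y0) in
  0 < W ->
  is_vertex P vl -> is_vertex P vr -> is_vertex P vb -> is_vertex P vt ->
  left_side x0 x1 y0 y1 vl -> right_side x0 x1 y0 y1 vr ->
  bottom_side x0 x1 y0 y1 vb -> top_side x0 x1 y0 y1 vt ->
  uniq [:: vl; vb; vr; vt] ->
  ~ collinear vl vb vr -> ~ collinear vl vb vt ->
  ~ collinear vl vr vt -> ~ collinear vb vr vt ->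
  let r := Num.sqrt (L ^+ 2 + 4 * W ^+ 2) / 4 in
  r <= 2 * r_opt P.
Proof.
move=> [s [_ ->]] [lex [ley [box _]]] L W _ [Pvl _] [Pvr _] [Pvb _] [Pvt _]
  [vlx _] [vrx _] [vby _] [vty _] _ _ _ _ _; cbv zeta.
suff : Num.sqrt (L ^+ 2 + 4 * W ^+ 2) / 8 <= r_opt (conv_hull s) by lra.
apply: r_opt_ge => [|rho c1 c2 rho0 cover].
  exists (x1 - x0 + (y1 - y0)), (x0, y0), (x0, y0); split; first lra.
  by move=> z /box /(rect_sub_disk lex ley) ?; left.
have [a a14 bound] := cover_width_height (@conv_hull_segpt R s) cover Pvl Pvb Pvr Pvt.
rewrite vlx vrx vby vty in bound.
have := @max_min_sq_le _ (x1 - x0) (y1 - y0) a; rewrite !subr_ge0 => /(_ lex ley a14).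
rewrite -/L -/W ler_pdivrMr // => LW; apply: sqrtr_le; first lra.
by rewrite exprMn; lra.
Qed.
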